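(* Let $X$ be a compact metric space and $(f_n)_{n\ge1}$ a sequence of continuous maps $X\to X$ converging uniformly to a function $\phi\colon X\to X$. Let $p\in\mathbb{N}^*$ and $x\in X$. Then $f_1^p(x)$ is a periodic point of $\phi$ if and only if there is a positive integer $n$ such that $f_1^p(x)=f_1^{p+n}(x)$.
   Context: $\mathbb{N}=\{1,2,\dots\}$, $\mathbb{N}^*$ the free ultrafilters on $\mathbb{N}$. For $r\in\mathbb{N}^*$, $r\text{-}\lim_m x_m$ is the unique $y$ with $\{m:x_m\in V\}\in r$ for all neighbourhoods $V$ of $y$. $f_1^m=f_m\circ\cdots\circ f_1$, $f_1^r(x)=r\text{-}\lim_m f_1^m(x)$ for $r\in\mathbb{N}^*$; $p+n=\{A:\{m:m+n\in A\}\in p\}$. A point $y$ is a periodic point of $\phi$ if $\phi^n(y)=y$ for some positive integer $n$. *)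

From HB Require Import structures.
From mathcomp Require Import all_boot all_order all_algebra.
From mathcomp Require Import all_classical all_reals all_analysis.
Set Implicit Arguments. Unset Strict Implicit. Unset Printing Implicit Defensive.
Import Order.TTheory GRing.Theory Num.Theory.
Local Open Scope classical_set_scope.

Definition free_ultrafilter (r : set_system nat) : Prop :=
  UltraFilter r /\ (forall A : set nat, finite_set A -> ~ r A).

(* p + n = {A : {m : m + n in A} in p} *)
Definition ushift (r : set_system nat) (n : nat) : set_system nat :=
  [set A | r [set m | A (m + n)%N]].

(* Compositions: iterf f m = f_m o ... o f_1, where the paper's f_k is f (k-1).
   iterf f 0 = id. *)
Fixpoint iterf {X : Type} (f : nat -> X -> X) (m : nat) : X -> X :=
  match m with
  | 0 => id
  | m'.+1 => fun x => f m' (iterf f m' x)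
  end.

(* r-lim_m u m : the point y with u @ r --> y (unique in a Hausdorff space);
   chosen by classical choice, default u 0 if no limit exists. *)
Definition rlim {X : topologicalType} (r : set_system nat) (u : nat -> X) : X :=
  xget (u 0%N) [set y | u @ r --> y].

Definition iterf_ultra {X : topologicalType} (f : nat -> X -> X)
  (r : set_system nat) (x : X) : X :=
  rlim r (fun m => iterf f m x).

Definition periodic_point {X : Type} (phi : X -> X) (y : X) : Prop :=
  exists n : nat, (0 < n)%N /\ iter n phi y = y.

From HB Require Import structures.
From mathcomp Require Import all_boot all_order all_algebra.
From mathcomp Require Import all_classical all_reals all_analysis.
Local Open Scope classical_set_scope.

(* Since f_n -> phi uniformly and phi is continuous, along the ultrafilter p
   (which contains every tail of nat) f_{m+k+1}(z_m) converges to phi(lim z_m).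
   By induction, the sequence m |-> f_1^{m+n}(x) converges along p to
   phi^n(f_1^p(x)), and its p-limit is f_1^{p+n}(x).  Hence
   f_1^{p+n}(x) = phi^n(f_1^p(x)) for every n, which turns the periodicity of
   f_1^p(x) under phi into the stated identity. *)

Lemma ushiftE (r : set_system nat) (n : nat) : ushift r n = (addn^~ n) @ r.
Proof. by []. Qed.

Lemma free_ultrafilter_ge (p : set_system nat) (N : nat) :
  free_ultrafilter p -> p [set m | (N <= m)%N].
Proof.
case=> pU pfree; have [//|pC] := in_ultra_setVsetC [set m | (N <= m)%N] pU.
exfalso; apply: (pfree _ _ pC); apply: (sub_finite_set _ (finite_II N)).
by move=> m /= /negP; rewrite -ltnNge.
Qed.

Lemma compact_ultra_cvg {I : Type} {T : topologicalType} {F : set_system I}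
    (u : I -> T) :
  UltraFilter F -> compact [set: T] -> exists y : T, u @ F --> y.
Proof.
move=> FU Tc; have FF : ProperFilter F := @ultra_proper _ _ FU.
have [y [_ uFy]] := Tc (u @ F) (fmap_proper_filter u FF) filterT.
exists y => B By; have [//|FnB] := in_ultra_setVsetC (u @^-1` B) FU.
by have [z []] := uFy (~` B) B FnB By.
Qed.

Lemma rlimP {T : topologicalType} {r : set_system nat} {u : nat -> T} :
  (exists y : T, u @ r --> y) -> u @ r --> rlim r u.
Proof. exact: xgetPex. Qed.

Lemma rlim_unique (T : topologicalType) (r : set_system nat) (u : nat -> T)
    (y : T) :
  hausdorff_space T -> ProperFilter r -> u @ r --> y -> rlim r u = y.
Proof. by move=> hT rF uy; apply: (cvg_unique hT _ uy); apply: rlimP; exists y. Qed.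

Section uniform_limit_along_tails.
Context {X : uniformType} {f : nat -> X -> X} {phi : X -> X}.
Hypothesis f_cont : forall n, continuous (f n).
Hypothesis f_phi : {uniform, f @ \oo --> phi}.

Lemma uniform_limit_cont : continuous phi.
Proof. by apply: (uniform_limit_continuous _ _ f_phi); exists 0%N => // n _. Qed.

Context {F : set_system nat} {FF : Filter F}.
Hypothesis F_ge : forall N, F [set m | (N <= m)%N].

Lemma uniform_limit_eventually {A : set (X * X)} : entourage A -> forall k : nat,
  \forall m \near F, forall z, A (phi z, f (m + k)%N z).
Proof.
move=> entA k; have [N _ fN] : \forall n \near \oo, forall z, A (phi z, f n z).
  apply: (f_phi [set g | forall z, A (phi z, g z)]).
  by apply/uniform_nbhs; exists A; split=> // g Ag z; exact: Ag.
apply: filterS (F_ge N) => m /= Nm z; apply: fN => /=.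
exact: leq_trans Nm (leq_addr _ _).
Qed.

Lemma cvg_uniform_limit_shift (h : nat -> X) (y : X) (k : nat) :
  h @ F --> y -> (fun m => f (m + k)%N (h m)) @ F --> phi y.
Proof.
move=> hy; apply/cvg_app_entourageP => A entA.
have phih : \forall m \near F, split_ent A (phi y, phi (h m)).
  have : (phi \o h) @ F --> phi y by apply: cvg_comp hy _; exact: uniform_limit_cont.
  by move/cvg_app_entourageP; apply; exact: entourage_split_ent.
have fphi := uniform_limit_eventually (entourage_split_ent entA) k.
apply: filterS (filterI phih fphi) => m [phihm fphim].
exact: (entourage_split (phi (h m)) entA phihm (fphim _)).
Qed.

Lemma cvg_iterf_shift (x y : X) (n : nat) :
  (fun m => iterf f m x) @ F --> y ->
  (fun m => iterf f (m + n) x) @ F --> iter n phi y.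
Proof.
move=> xy; elim: n => [|n IHn] /=.
  by under eq_fun do rewrite addn0.
under eq_fun do rewrite addnS.
exact: cvg_uniform_limit_shift.
Qed.

End uniform_limit_along_tails.

Lemma iterf_ultra_ushift {R : realType} {X : metricType R} {f : nat -> X -> X}
    {phi : X -> X} {p : set_system nat} (x : X) (n : nat) :
  compact [set: X] -> (forall n, continuous (f n)) ->
  {uniform, f @ \oo --> phi} -> free_ultrafilter p ->
  iterf_ultra f (ushift p n) x = iter n phi (iterf_ultra f p x).
Proof.
move=> Xc f_cont f_phi p_free; have [pU _] := p_free.
have xp := rlimP (compact_ultra_cvg (fun m => iterf f m x) pU Xc).
rewrite ushiftE; apply: rlim_unique; first exact: metric_hausdorff.
apply: (cvg_iterf_shift f_cont f_phi _ _ _ _ xp).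
by move=> N; exact: free_ultrafilter_ge.
Qed.

Theorem corollary3p14 (R : realType) (X : metricType R)
  (f : nat -> X -> X) (phi : X -> X) (p : set_system nat) (x : X) :
  compact [set: X] ->
  (forall n, continuous (f n)) ->
  {uniform, f @ \oo --> phi} ->
  free_ultrafilter p ->
  (periodic_point phi (iterf_ultra f p x) <->
   exists n : nat, (0 < n)%N /\ iterf_ultra f p x = iterf_ultra f (ushift p n) x).
Proof.
move=> Xc f_cont f_phi p_free.
have shiftE n := iterf_ultra_ushift x n Xc f_cont f_phi p_free.
split=> -[n [n_gt0 fixn]]; exists n; split=> //.
- by rewrite shiftE fixn.
- by rewrite -shiftE -fixn.
Qed.
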